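(* Let $f:\mathbb{R}^n_{>0} \to \mathbb{R}^n_{>0}$ be order-preserving, homogeneous, multiplicatively convex, and analytic. Then $f$ is type K order-preserving if and only if for every $i \in [n]$ there is an arc from $i$ to itself in $\mathcal{G}(f)$, i.e. $\lim_{t\to\infty} f(\exp(t e_i))_i = \infty$ for every $i\in[n]$.
   Context: $[n] = \{1,\dots,n\}$; $e_i$ are the standard basis vectors; $\log$ and $\exp$ act entrywise. The order on $\mathbb{R}^n$ is entrywise. $f$ is order-preserving if $x \le y \Rightarrow f(x)\le f(y)$; homogeneous if $f(tx) = t f(x)$ for $t > 0$; analytic if each coordinate is real analytic; multiplicatively convex if $\log\circ f\circ\exp$ has convex coordinate functions on $\mathbb{R}^n$. $f$ is type K order-preserving if for any $x \le y$ there is $\epsilon>0$ with $f(y) - f(x) \ge \epsilon(y-x)$. The directed graph $\mathcal{G}(f)$ has vertices $[n]$ and an arc from $i$ to $j$ iff $\lim_{t\to\infty} f(\exp(t e_j))_i = \infty$. *)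

From HB Require Import structures.
From mathcomp Require Import all_boot all_order all_algebra.
From mathcomp Require Import all_classical all_reals all_analysis.
Set Implicit Arguments. Unset Strict Implicit. Unset Printing Implicit Defensive.
Import Order.TTheory GRing.Theory Num.Theory.
Import numFieldNormedType.Exports.
Local Open Scope classical_set_scope.
Local Open Scope ring_scope.

Section Defs.
Variables (R : realType) (n : nat).
Notation vec := ('I_n -> R).

Definition vle (x y : vec) : Prop := forall i, x i <= y i.
Definition vpos (x : vec) : Prop := forall i, 0 < x i.

Definition basis (j : 'I_n) : vec := fun k => (k == j)%:R.
Definition vexp (u : vec) : vec := fun k => expR (u k).

Definition maps_pos (f : vec -> vec) : Prop :=
  forall x, vpos x -> vpos (f x).

Definition order_preserving (f : vec -> vec) : Prop :=
  forall x y, vpos x -> vpos y -> vle x y -> vle (f x) (f y).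

Definition homogeneous (f : vec -> vec) : Prop :=
  forall (t : R) x, 0 < t -> vpos x -> f (fun k => t * x k) = (fun k => t * f x k).

Definition mult_convex (f : vec -> vec) : Prop :=
  forall (i : 'I_n) (u v : vec) (l : R), 0 <= l <= 1 ->
    ln (f (vexp (fun k => l * u k + (1 - l) * v k)) i)
    <= l * ln (f (vexp u) i) + (1 - l) * ln (f (vexp v) i).

(* The multi-indexed series is summed along exhausting cubes {a : a_k < N};
   absolute convergence makes the value independent of the exhaustion. *)
Definition ps_term (c : ('I_n -> nat) -> R) (x y : vec) (a : 'I_n -> nat) : R :=
  c a * \prod_(k < n) (y k - x k) ^+ (a k).

Definition cube_sum (c : ('I_n -> nat) -> R) (x y : vec) (N : nat) : R :=
  \sum_(a : {ffun 'I_n -> 'I_N}) ps_term c x y (fun k => nat_of_ord (a k)).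

Definition cube_abs_sum (c : ('I_n -> nat) -> R) (x y : vec) (N : nat) : R :=
  \sum_(a : {ffun 'I_n -> 'I_N}) `|ps_term c x y (fun k => nat_of_ord (a k))|.

Definition analytic_at (g : vec -> R) (x : vec) : Prop :=
  exists r : R, 0 < r /\ exists c : ('I_n -> nat) -> R,
    forall y : vec, (forall k, `|y k - x k| < r) ->
      (exists M : R, forall N, cube_abs_sum c x y N <= M) /\
      (cube_sum c x y @ \oo --> g y).

Definition analytic_pos (f : vec -> vec) : Prop :=
  forall (i : 'I_n) x, vpos x -> analytic_at (fun y => f y i) x.

Definition typeK (f : vec -> vec) : Prop :=
  forall x y, vpos x -> vpos y -> vle x y ->
    exists eps : R, 0 < eps /\
      forall k, f y k - f x k >= eps * (y k - x k).

Definition graph_arc (f : vec -> vec) (i j : 'I_n) : Prop :=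
  (fun t : R => f (vexp (fun k => t * basis j k)) i) @ +oo --> +oo.

End Defs.

(* If f is of type K, then g(t) := ln f(exp(t e_i))_i is convex (multiplicative
   convexity) and g(0) < g(1), so g grows at least linearly and there is a loop at i.
   Conversely, assume every vertex carries a loop and fix 0 < x <= y.  It suffices
   that each s |-> f(x + s e_k)_k is strictly increasing on [0, oo).  It is
   nondecreasing, and unbounded by homogeneity and the loop at k.  If it were
   constant on some [0, s], let T be the supremum of the set where it keeps the
   value f(x)_k.  By analyticity, near T it is a power series in one variable which
   is constant on the left of T; the identity principle makes it constant on the
   right of T too, contradicting the choice of T. *)
From Pilot Require Import Defs.
From HB Require Import structures.
From mathcomp Require Import all_boot all_order all_algebra.
From mathcomp Require Import all_classical all_reals all_analysis.
From mathcomp Require Import ring lra.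
Set Implicit Arguments.
Unset Strict Implicit.
Unset Printing Implicit Defensive.
Import Order.TTheory GRing.Theory Num.Theory.
Import numFieldNormedType.Exports.
Local Open Scope classical_set_scope.
Local Open Scope ring_scope.

Section PowerSeries.
Variable R : realType.

Lemma big_ord_indicator (N m : nat) (X : R) :
  \sum_(i < N) ((i : nat) == m)%:R * X = (m < N)%:R * X.
Proof.
elim: N => [|N IH]; first by rewrite big_ord0 mul0r.
rewrite big_ord_recr /= IH -mulrDl -natrD; congr (_%:R * _).
case: (ltngtP m N) => h; [by rewrite ltnS ltnW | by rewrite ltnS leqNgt h | by rewrite h ltnSn].
Qed.

Lemma sum_const_pseries (N : nat) (C s : R) :
  \sum_(i < N) ((i : nat) == 0%N)%:R * C * s ^+ i = (0 < N)%:R * C.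
Proof.
rewrite -big_ord_indicator; apply: eq_bigr => -[[|i] hi] _ /=.
  by rewrite expr0 mulr1.
by rewrite !mul0r.
Qed.

Lemma cvg_const_pseries (C : R) : (fun N : nat => (0 < N)%:R * C) @ \oo --> C.
Proof. by apply: cvg_near_cst; exists 1%N => // N /= ->; rewrite mul1r. Qed.

Lemma eq0_le_small_multiples (X K : R) : 0 <= X -> 0 < K ->
  (forall t, 0 < t -> t < 1 -> X <= t * K) -> X = 0.
Proof.
move=> X0 K0 H; apply/eqP; rewrite eq_le X0 andbT leNgt; apply/negP => Xp.
have hd : 0 < X + K *+ 2 by rewrite addr_gt0 // mulrn_wgt0.
have := H (X / (X + K *+ 2)).
rewrite divr_gt0 // ltr_pdivrMr // mul1r ltrDl mulrn_wgt0 //.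
move=> /(_ isT isT); rewrite mulrAC ler_pdivlMr // => h.
nra.
Qed.

Definition pseries_on (c : nat -> R) (r : R) (h : R -> R) : Prop :=
  forall u, `|u| < r ->
    (exists M, forall N, \sum_(m < N) `|c m * u ^+ m| <= M) /\
    ((fun N => \sum_(m < N) c m * u ^+ m) @ \oo --> h u).

Lemma pseries_split_at (a : nat -> R) (s : R) (m N : nat) : (m < N)%N ->
  (forall i, (i < m)%N -> a i = 0) ->
  \sum_(i < N) a i * s ^+ i = a m * s ^+ m + \sum_(i < N | (m < i)%N) a i * s ^+ i.
Proof.
move=> mN a0; rewrite (bigD1 (Ordinal mN)) //=; congr (_ + _).
rewrite (bigID (fun i : 'I_N => (m < i)%N)) /= [X in _ + X]big1 ?addr0.
  by apply: eq_bigl => i; rewrite andb_idl // => mi; apply/eqP => ei; rewrite ei ltnn in mi.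
move=> i /andP [im]; rewrite -leqNgt leq_eqVlt => /orP [/eqP ei|/a0 ->].
  by case/eqP: im; apply: val_inj.
by rewrite mul0r.
Qed.

Lemma pseries_tail_le (a : nat -> R) (q t s M : R) (m N : nat) :
  0 <= q -> 0 <= t -> t <= 1 -> `|s| <= q * t ->
  (forall N, \sum_(i < N) `|a i| * q ^+ i <= M) ->
  `|\sum_(i < N | (m < i)%N) a i * s ^+ i| <= t ^+ m.+1 * M.
Proof.
move=> q0 t0 t1 sqt HM; apply: (le_trans (ler_norm_sum _ _ _)).
apply: (le_trans _ (ler_wpM2l (exprn_ge0 _ t0) (HM N))).
rewrite mulr_sumr [X in _ <= X](bigID (fun i : 'I_N => (m < i)%N)) /=.
rewrite -[X in X <= _]addr0; apply: lerD; last first.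
  by apply: sumr_ge0 => i _; rewrite !mulr_ge0 ?exprn_ge0.
apply: ler_sum => i mi; rewrite normrM normrX mulrCA; apply: ler_wpM2l => //.
apply: (le_trans (lerXn2r _ _ _ sqt)); rewrite ?nnegrE ?mulr_ge0 //.
by rewrite exprMn mulrC; apply: ler_wpM2r; rewrite ?exprn_ge0 // ler_wiXn2l.
Qed.

(* Vanishing on a left half-neighbourhood of [0] forces every coefficient to
   vanish: after dividing by [s ^+ m], the lowest surviving term dominates. *)
Lemma pseries_coef_eq0 (a : nat -> R) (q M : R) : 0 < q ->
  (forall N, \sum_(i < N) `|a i| * q ^+ i <= M) ->
  (forall s, -q < s -> s < 0 -> (fun N => \sum_(i < N) a i * s ^+ i) @ \oo --> 0) ->
  forall m, a m = 0.
Proof.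
move=> q0 HM Hc; have M0 : 0 <= M by have := HM 0%N; rewrite big_ord0.
elim/ltn_ind => m IH.
suff : `|a m| * q ^+ m = 0.
  by move/eqP; rewrite mulf_eq0 normr_eq0 expf_eq0 (gt_eqF q0) andbF orbF => /eqP.
apply: (@eq0_le_small_multiples _ (q ^+ m + M)).
- by rewrite mulr_ge0 // exprn_ge0 // ltW.
- by rewrite ltr_wpDr // exprn_gt0.
move=> t t0 t1; set s := - (q * t).
have qt0 : 0 < q * t by rewrite mulr_gt0.
have : (fun N => \sum_(i < N) a i * s ^+ i) @ \oo --> 0.
  by apply: Hc; rewrite ?ltrN2 ?gtr_pMr // oppr_lt0.
move=> /cvgr0Pnorm_lt /(_ ((q * t) ^+ m * t)).
rewrite mulr_gt0 ?exprn_gt0 // => /(_ isT) [N0 _ HN0].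
pose N := maxn N0 m.+1.
have mN : (m < N)%N by rewrite leq_max ltnSn orbT.
have := HN0 N (leq_maxl _ _); rewrite /= (@pseries_split_at a s m N mN IH) => hS.
have ns : `|s| = q * t by rewrite normrN gtr0_norm.
have sqt : `|s| <= q * t by rewrite ns.
have hT := @pseries_tail_le a q t s M m N (ltW q0) (ltW t0) (ltW t1) sqt HM.
have h1 : `|a m * s ^+ m| <= (q * t) ^+ m * t + t ^+ m.+1 * M.
  rewrite -[a m * _](addrK (\sum_(i < N | (m < i)%N) a i * s ^+ i)).
  by apply: (le_trans (ler_normB _ _)); apply: lerD => //; apply: ltW.
rewrite normrM normrX ns exprMn in h1.
rewrite -(ler_pM2l (exprn_gt0 m t0)).
have -> : t ^+ m * (`|a m| * q ^+ m) = `|a m| * (q ^+ m * t ^+ m) by ring.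
have -> : t ^+ m * (t * (q ^+ m + M)) = q ^+ m * t ^+ m * t + t ^+ m.+1 * M.
  by rewrite exprS; ring.
exact: h1.
Qed.

Lemma pseries_on_const (c : nat -> R) (r C : R) (h : R -> R) : 0 < r ->
  pseries_on c r h -> (forall u, -r < u -> u < 0 -> h u = C) ->
  forall u, `|u| < r -> h u = C.
Proof.
move=> r0 hc hC; pose a i := c i - ((i == 0)%N)%:R * C.
pose q := r / 2; have q0 : 0 < q by rewrite divr_gt0.
have qr : q < r by rewrite /q; lra.
have [[M HM] _] := hc (- q) (ltac:(by rewrite normrN gtr0_norm)).
have bound N : \sum_(i < N) `|a i| * q ^+ i <= M + `|C|.
  apply: (@le_trans _ _ (\sum_(i < N) (`|c i * (- q) ^+ i| + ((i : nat) == 0%N)%:R * `|C|))).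
    apply: ler_sum => -[[|i] hi] _; rewrite /a /= ?mulr1n ?mulr0n.
      by rewrite expr0 !mulr1 !mul1r ler_normB.
    by rewrite mul0r subr0 mul0r addr0 normrM normrX normrN (gtr0_norm q0).
  rewrite big_split big_ord_indicator /=; apply: lerD; first exact: HM.
  by case: N => [|N] /=; rewrite ?mulr0n ?mulr1n ?mul0r ?mul1r.
have hconv s : -q < s -> s < 0 -> (fun N => \sum_(i < N) a i * s ^+ i) @ \oo --> 0.
  move=> s1 s2.
  have e N : \sum_(i < N) a i * s ^+ i = \sum_(i < N) c i * s ^+ i - (0 < N)%:R * C.
    by rewrite -(sum_const_pseries N C s) -sumrB; apply: eq_bigr => i _; rewrite mulrBl.
  have hs : h s = C by apply: hC; lra.
  have sr : `|s| < r by rewrite ltr0_norm //; lra.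
  rewrite (eq_cvg _ _ e); have := cvgB (hc s sr).2 (@cvg_const_pseries C).
  by rewrite hs subrr; apply.
have a0 := @pseries_coef_eq0 a q (M + `|C|) q0 bound hconv.
move=> u ur.
have e : (fun N => \sum_(m < N) c m * u ^+ m) = (fun N => (0 < N)%:R * C).
  apply: funext => N; rewrite -(sum_const_pseries N C u); apply: eq_bigr => i _.
  by move/eqP: (a0 i); rewrite subr_eq0 => /eqP ->.
have := (hc u ur).2; rewrite e => hu.
have := cvg_unique (@Rhausdorff R) hu (@cvg_const_pseries C).
by apply; apply: fmap_proper_filter.
Qed.
End PowerSeries.

Section CoordinateLines.
Variables (R : realType) (n : nat).
Implicit Types (k : 'I_n) (x : 'I_n -> R) (s t : R).

Definition coord_shift k x s : 'I_n -> R := fun j => x j + s * Defs.basis R k j.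

Lemma basis01 k j : Defs.basis R k j = 0 \/ Defs.basis R k j = 1.
Proof. by rewrite /Defs.basis; case: (j == k); [right|left]. Qed.

Lemma coord_shift_pos k x s : vpos x -> 0 <= s -> vpos (coord_shift k x s).
Proof.
move=> xp s0 j; rewrite /coord_shift; case: (basis01 k j) => ->.
  by rewrite mulr0 addr0.
by rewrite mulr1 ltr_wpDr.
Qed.

Lemma coord_shift_le k x s t : s <= t -> vle (coord_shift k x s) (coord_shift k x t).
Proof.
by move=> st j; rewrite /coord_shift lerD2l; case: (basis01 k j) => ->; rewrite ?mulr0 ?mulr1.
Qed.

Lemma coord_shift0 k x : coord_shift k x 0 = x.
Proof. by apply: funext => j; rewrite /coord_shift mul0r addr0. Qed.

Lemma coord_shift_shift k x s t :
  coord_shift k (coord_shift k x s) t = coord_shift k x (s + t).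
Proof. by apply: funext => j; rewrite /coord_shift mulrDl addrA. Qed.

Definition on_axis k (a : 'I_n -> nat) := [forall j, (j != k) ==> (a j == 0%N)].

Definition axis_coef k (c : ('I_n -> nat) -> R) (m : nat) : R :=
  c (fun j => if j == k then m else 0%N).

Lemma sum_cube_axis k (N : nat) (F : {ffun 'I_n -> 'I_N} -> R) (G : 'I_N -> R) :
  (forall a, F a = if on_axis k (fun j => nat_of_ord (a j)) then G (a k) else 0) ->
  \sum_a F a = \sum_(m < N) G m.
Proof.
move=> HF; rewrite (partition_big (fun a : {ffun 'I_n -> 'I_N} => a k) xpredT) //=.
apply: eq_bigr => m _.
have m0 : (0 < N)%N by apply: leq_ltn_trans (ltn_ord m).
pose e := [ffun j => if j == k then m else Ordinal m0].
rewrite (bigD1 e) ?ffunE ?eqxx //= big1 ?addr0.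
  rewrite HF ffunE eqxx; case: ifP => //; move/negP; case.
  by apply/forallP => j; apply/implyP => /negbTE jk; rewrite ffunE jk.
move=> a /andP [/eqP ak nae]; rewrite HF; case: ifP => // /forallP H.
case/negP: nae; apply/eqP/ffunP => j; rewrite ffunE.
case: ifP => [/eqP -> // | /negbT jk]; apply: val_inj => /=.
by move: (implyP (H j) jk) => /eqP.
Qed.

Lemma ps_term_coord_shift k c x s (a : 'I_n -> nat) :
  ps_term c x (coord_shift k x s) a =
  if on_axis k a then axis_coef k c (a k) * s ^+ a k else 0.
Proof.
rewrite /ps_term /coord_shift; under eq_bigr do rewrite addrC addKr.
case: ifP => H.
  congr (_ * _).
    congr c; apply: funext => j; case: eqP => [-> // | /eqP jk].
    by move: (implyP (forallP H j) jk) => /eqP.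
  rewrite (bigD1 k) //= big1 ?mulr1 /Defs.basis ?eqxx ?mulr1 // => j jk.
  by move: (implyP (forallP H j) jk) => /eqP ->; rewrite expr0.
move/negbT/forallPn: H => [j]; rewrite negb_imply => /andP [jk aj].
by rewrite (bigD1 j) //= /Defs.basis (negbTE jk) mulr0 expr0n (negbTE aj) mul0r mulr0.
Qed.

(* Along a coordinate line only the multi-indices supported on that axis survive. *)
Lemma analytic_at_coord_shift (g : ('I_n -> R) -> R) k x : analytic_at g x ->
  exists2 r, 0 < r & exists c, pseries_on c r (fun u => g (coord_shift k x u)).
Proof.
move=> [r [r0 [c Hc]]]; exists r => //; exists (axis_coef k c) => u ur.
have [] := Hc (coord_shift k x u).
  move=> j; rewrite /coord_shift addrC addKr; case: (basis01 k j) => ->.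
    by rewrite mulr0 normr0.
  by rewrite mulr1.
move=> [M HM] Hcv; split.
  exists M => N.
  have <- : cube_abs_sum c x (coord_shift k x u) N = \sum_(m < N) `|axis_coef k c m * u ^+ m|.
    apply: (@sum_cube_axis k) => a.
    by rewrite ps_term_coord_shift; case: ifP; rewrite ?normr0.
  exact: HM.
suff -> : (fun N => \sum_(m < N) axis_coef k c m * u ^+ m) = cube_sum c x (coord_shift k x u).
  exact: Hcv.
by apply: funext => N; apply/esym/(@sum_cube_axis k) => a; rewrite ps_term_coord_shift.
Qed.

Lemma analytic_coord_shift_const_right (g : ('I_n -> R) -> R) k x d C :
  analytic_at g x -> 0 < d -> (forall u, -d < u -> u < 0 -> g (coord_shift k x u) = C) ->
  exists2 q, 0 < q & g (coord_shift k x q) = C.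
Proof.
move=> /(analytic_at_coord_shift k) [r r0 [c hc]] d0 hC.
pose r' := Num.min r d.
have r'0 : 0 < r' by rewrite lt_min r0 d0.
have r'r : r' <= r by rewrite ge_min lexx.
have r'd : r' <= d by rewrite ge_min lexx orbT.
have hc' : pseries_on c r' (fun u => g (coord_shift k x u)).
  by move=> u ur; apply: hc; apply: lt_le_trans ur r'r.
have hC' u : -r' < u -> u < 0 -> g (coord_shift k x u) = C.
  by move=> u1 u2; apply: hC => //; apply: le_lt_trans u1; rewrite lerN2.
exists (r' / 2); first by rewrite divr_gt0.
by apply: (pseries_on_const r'0 hc' hC'); rewrite gtr0_norm ?divr_gt0 //; lra.
Qed.

End CoordinateLines.

Section SelfLoops.
Variables (R : realType) (n : nat) (f : ('I_n -> R) -> 'I_n -> R).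
Hypothesis fop : order_preserving f.
Implicit Types (k : 'I_n) (x : 'I_n -> R) (s t : R).

Lemma coord_shift_mono k x s t : vpos x -> 0 <= s -> s <= t ->
  f (coord_shift k x s) k <= f (coord_shift k x t) k.
Proof.
move=> xp s0 st; apply: fop; last exact: coord_shift_le.
  exact: coord_shift_pos.
by apply: coord_shift_pos => //; apply: le_trans st.
Qed.

Hypothesis fhom : homogeneous f.

(* Compare [x + B e_k] with [min_j x_j] times [exp (t e_k)]. *)
Lemma self_loop_coord_shift_unbounded k x : graph_arc f k k -> vpos x ->
  exists2 B, 0 <= B & f x k < f (coord_shift k x B) k.
Proof.
move=> arc xp; pose mn := \big[Num.min/1]_j x j.
have mn0 : 0 < mn by apply: lt_bigmin.
have hmn j : mn <= x j by exact: bigmin_le.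
move: arc => /cvgryPge /(_ ((f x k + 1) / mn)) [M [_ HM]].
have := HM (M + 1); rewrite ltrDl ltr01 => /(_ isT).
set v := vexp _ => hv.
exists (mn * expR (M + 1)); first by rewrite mulr_ge0 // ltW ?expR_gt0.
have vp : vpos (fun j => mn * v j) by move=> j; rewrite mulr_gt0 ?expR_gt0.
have le1 : vle (fun j => mn * v j) (coord_shift k x (mn * expR (M + 1))).
  move=> j; rewrite /coord_shift /v /vexp; case: (basis01 R k j) => ->.
    by rewrite !mulr0 expR0 mulr1 addr0.
  by rewrite !mulr1 ler_wpDl // ltW.
have := fop vp (coord_shift_pos k xp (mulr_ge0 (ltW mn0) (ltW (expR_gt0 _)))) le1 k.
rewrite fhom //; last by move=> j; apply: expR_gt0.
apply: lt_le_trans; apply: (lt_le_trans _ (ler_wpM2l (ltW mn0) hv)).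
by rewrite mulrC divfK ?gt_eqF // ltrDl ltr01.
Qed.

Hypothesis fan : analytic_pos f.

Lemma self_loop_coord_shift_strict k x s : graph_arc f k k -> vpos x -> 0 < s ->
  f x k < f (coord_shift k x s) k.
Proof.
move=> arc xp s0; rewrite ltNge; apply/negP => hle.
set C := f x k.
have fC t : 0 <= t -> C <= f (coord_shift k x t) k.
  by move=> t0; rewrite /C -{1}(coord_shift0 k x); apply: coord_shift_mono.
pose A := [set t : R | 0 <= t /\ f (coord_shift k x t) k = C].
have [B B0 hB] := self_loop_coord_shift_unbounded arc xp.
have ubA : ubound A B.
  move=> t [t0 ht]; rewrite leNgt; apply/negP => Bt.
  by have := coord_shift_mono k xp B0 (ltW Bt); rewrite ht leNgt hB.
have supA : has_sup A by split; [exists 0; split => //; rewrite coord_shift0 | exists B].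
set T := sup A.
have sA : A s by split; [exact: ltW | apply/le_anti; rewrite hle fC // ltW].
have T0 : 0 < T by apply: lt_le_trans s0 (sup_upper_bound supA sA).
have below t : 0 <= t -> t < T -> f (coord_shift k x t) k = C.
  move=> t0 tT; have tT' : 0 < T - t by rewrite subr_gt0.
  have [e [e0 he] te] := sup_adherent tT' supA.
  have te' : t < e by rewrite -/T in te; lra.
  by apply/le_anti; rewrite fC // andbT -he; apply: coord_shift_mono => //; exact: ltW.
have [q q0 hq] : exists2 q, 0 < q & f (coord_shift k (coord_shift k x T) q) k = C.
  apply: (@analytic_coord_shift_const_right R n (fun y => f y k) k _ T C _ T0).
    exact/fan/coord_shift_pos/ltW.
  by move=> u u1 u2; rewrite coord_shift_shift; apply: below; lra.
have : A (T + q) by split; [lra | rewrite -coord_shift_shift].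
by move/(sup_upper_bound supA); rewrite -/T; lra.
Qed.

Lemma self_loops_typeK : (forall k, graph_arc f k k) -> typeK f.
Proof.
move=> arcs x y xp yp xy.
have st k : x k < y k -> f x k < f y k.
  move=> hk; apply: (lt_le_trans (self_loop_coord_shift_strict (arcs k) xp (_ : 0 < y k - x k))).
    by rewrite subr_gt0.
  apply: fop => //; first by apply: coord_shift_pos => //; rewrite subr_ge0 ltW.
  move=> j; rewrite /coord_shift /Defs.basis; case: eqP => [->|_].
    by rewrite mulr1 addrC subrK.
  by rewrite mulr0 addr0.
pose e k := if x k < y k then (f y k - f x k) / (y k - x k) else 1.
exists (\big[Num.min/1]_k e k); split.
  by apply: lt_bigmin => // k _; rewrite /e; case: ifP => // hk; rewrite divr_gt0 ?subr_gt0 ?st.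
move=> k; have := bigmin_le 1 k e; rewrite /e; case: ifP => hk h.
  by rewrite -ler_pdivlMr ?subr_gt0.
have -> : y k = x k by apply/le_anti; rewrite xy andbT leNgt hk.
by rewrite subrr mulr0 subr_ge0 fop.
Qed.

End SelfLoops.

Section TypeKSelfLoops.
Variables (R : realType) (n : nat) (f : ('I_n -> R) -> 'I_n -> R).
Implicit Types (i : 'I_n) (t : R).

Let ray i t : 'I_n -> R := vexp (fun j => t * Defs.basis R i j).

Lemma mult_convex_ray_chord i t : mult_convex f -> 1 <= t ->
  ln (f (ray i 0) i) + t * (ln (f (ray i 1) i) - ln (f (ray i 0) i))
  <= ln (f (ray i t) i).
Proof.
move=> fcv t1; have t0 : 0 < t by exact: lt_le_trans t1.
have := fcv i (fun j => t * Defs.basis R i j) (fun j => 0 * Defs.basis R i j) t^-1.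
rewrite invr_ge0 ltW //= invf_le1 // => /(_ t1).
have -> : vexp (fun j => t^-1 * (t * Defs.basis R i j) + (1 - t^-1) * (0 * Defs.basis R i j))
    = ray i 1.
  by apply: funext => j; rewrite /ray /vexp mul0r mulr0 addr0 mulrA mulVf ?gt_eqF.
rewrite -/(ray i t) -/(ray i 0) => /(ler_wpM2l (ltW t0)).
rewrite mulrDr mulrA mulfV ?gt_eqF // mul1r mulrA mulrBr mulr1 mulfV ?gt_eqF //.
nra.
Qed.

Lemma typeK_self_loop i : maps_pos f -> mult_convex f -> typeK f -> graph_arc f i i.
Proof.
move=> fpos fcv tk; pose g t := ln (f (ray i t) i).
have fv t : 0 < f (ray i t) i by apply: fpos => j; apply: expR_gt0.
have lt01 : f (ray i 0) i < f (ray i 1) i.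
  have rp t : vpos (ray i t) by move=> j; apply: expR_gt0.
  have vl : vle (ray i 0) (ray i 1).
    by move=> j; rewrite /ray /vexp ler_expR ler_wpM2r ?ler01 // /Defs.basis ler0n.
  have [eps [eps0 He]] := tk _ _ (rp 0) (rp 1) vl.
  have := He i; rewrite /ray /vexp /Defs.basis eqxx mulr1 mul0r expR0 => h.
  by rewrite -subr_gt0; apply: lt_le_trans h; rewrite mulr_gt0 // subr_gt0.
have d0 : 0 < g 1 - g 0 by rewrite subr_gt0 /g ltr_ln ?posrE.
apply/cvgryPge => A.
exists (Num.max 1 ((A - 1 - g 0) / (g 1 - g 0))); split; first exact: num_real.
move=> t; rewrite gt_max => /andP [t1 tA].
rewrite -/(ray i t) -[f _ i]lnK ?posrE //.
apply: le_trans (expR_ge1Dx _); rewrite -/(g t).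
have := mult_convex_ray_chord i fcv (ltW t1); rewrite -/(g t) -/(g 0) -/(g 1).
have : A - 1 - g 0 < t * (g 1 - g 0) by rewrite -ltr_pdivrMr.
lra.
Qed.

End TypeKSelfLoops.

Theorem mainTheorem10 (R : realType) (n : nat) (f : ('I_n -> R) -> ('I_n -> R)) :
  maps_pos f -> order_preserving f -> homogeneous f -> mult_convex f ->
  analytic_pos f ->
  (typeK f <-> forall i : 'I_n, graph_arc f i i).
Proof.
move=> fpos fop fhom fcv fan; split.
  by move=> tk i; apply: typeK_self_loop.
exact: self_loops_typeK.
Qed.
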